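(* Let $q$ be an odd prime power, let $1\le n\le q^2-2$, and write $n=u+vq$ with $0\le u,v\le q-1$. Define \[ \mathrm{I}=\sum_{\substack{k\ge 1,\ j\ge 0\\ k+j\le q-1\\ 2k-j\equiv 0\pmod{q-1}\\ q(q-1)+k-j=n}}\binom{q-1-k}{j}(-1)^j . \] Then \[ \mathrm{I}=\sum_{\max\{-1,\,v-q+\frac{u+v}{q-1}\}<s\le v-q+\frac{u+v}{q-1}+1}\binom{u+v-(s-v+q-1)(q-1)}{(s-2v+2q)(q-1)-2(u+v)}, \] the sum being over integers $s$ in the indicated range.
   Context: For integers $m\ge 0$ and $k$, $\binom mk$ is the usual binomial coefficient, equal to $0$ unless $0\le k\le m$. *)

From mathcomp Require Import all_boot all_order all_algebra.
Import Order.TTheory GRing.Theory Num.Theory.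
Local Open Scope ring_scope.

Definition binz (m k : int) : int :=
  if (0 <= m) && (0 <= k) then ('C(absz m, absz k))%:Z else 0.

From mathcomp Require Import all_boot all_order all_algebra.
From mathcomp Require Import zify.
Import Order.TTheory GRing.Theory Num.Theory.
Local Open Scope ring_scope.

(* Both sums have at most one nonzero term.  On the left, the equation
   q(q-1) + k - j = n fixes j in terms of k, and the congruence
   2k = j (mod q-1) then reads k = -(u+v) (mod q-1), which has exactly one
   solution k0 in [1, q-1].  Since q-1 is even, so is j0, and the surviving
   term is C(r, j0) with r = (u+v) mod (q-1) = q-1-k0.  On the right, the
   only integer in (t, t+1] is s0 = floor((u+v)/(q-1)) + v - q + 1, and its
   binomial is again C(r, j0); when s0 <= -1 is excluded by the range,
   j0 > r and that binomial vanishes anyway. *)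

Lemma sum_ord_pick (R : nmodType) (N : nat) (a : int) (x : R) :
  (x != 0 -> 0 <= a < N%:Z) -> \sum_(i < N) (if i%:Z == a then x else 0) = x.
Proof.
move=> a_range; have [->|/a_range /andP[a_ge0 a_lt]] := eqVneq x 0.
  by apply: big1 => i _; case: ifP.
case: a {a_range} a_ge0 a_lt => // a _ a_ltN; have a_lt : (a < N)%N by [].
rewrite (bigD1 (Ordinal a_lt)) //= eqxx big1 ?addr0 // => i ne_ia.
by rewrite eqz_nat -val_eqE /= in ne_ia *; rewrite (negbTE ne_ia).
Qed.

Lemma dvdn_add_mod (d m k : nat) : (0 < k <= d)%N ->
  (d %| k + m)%N = (k == d - m %% d)%N.
Proof.
move=> /andP[k_gt0 k_le]; have d_gt0 : (0 < d)%N by lia.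
rewrite {1}(divn_eq m d) addnCA dvdn_addr ?dvdn_mull //.
have lt_md := ltn_pmod m d_gt0.
apply/idP/eqP => [/dvdnP[c eq_c]|->]; last by rewrite subnK ?dvdnn // ltnW.
have c_eq1 : c = 1%N by nia.
by move: eq_c; rewrite c_eq1 mul1n; lia.
Qed.

Lemma divn_unit_itv (R : realFieldType) (a : int) (m d : nat) (x : int) :
  (0 < d)%N ->
  (a%:~R + m%:R / d%:R < x%:~R :> R) && (x%:~R <= a%:~R + m%:R / d%:R + 1 :> R) =
  (x == a + (m %/ d)%:Z + 1).
Proof.
move=> d_gt0; have d_pos : (0 : R) < d%:R by rewrite ltr0n.
rewrite -ltrBrDl ltr_pdivrMr // -addrA -lerBlDl -lerBlDr ler_pdivlMr //.
rewrite -[X in (_ - X) * _ <= _](mulr1z (1 : R)) !pmulrn -!intrB -!intrM ltr_int ler_int.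
have m_eq := divn_eq m d; have m_lt := ltn_pmod m d_gt0.
apply/idP/eqP => [/andP[lo hi]|->]; nia.
Qed.

Lemma binz_neq0 (m k : int) : binz m k != 0 -> 0 <= k <= m.
Proof.
rewrite /binz; case: m => m; case: k => k //=.
by case: (leqP k m) => [le_km _|/bin_small->]; first lia.
Qed.

Definition I_term (q n k j : nat) : int :=
  if [&& (1 <= k)%N, (k + j <= q - 1)%N,
         ((q - 1)%:Z %| 2 * k%:Z - j%:Z)%Z
       & (q * (q - 1))%:Z + k%:Z - j%:Z == n%:Z]
  then ('C(q - 1 - k, j))%:Z * (-1) ^+ j else 0.

Definition S_term (q u v : nat) (s : int) : int :=
  let t : rat := v%:R - q%:R + (u + v)%:R / (q - 1)%:R in
  if (Num.max (-1) t < s%:~R) && (s%:~R <= t + 1)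
  then binz ((u + v)%:Z - (s - v%:Z + q%:Z - 1) * (q%:Z - 1))
            ((s - 2 * v%:Z + 2 * q%:Z) * (q%:Z - 1) - 2 * (u + v)%:Z)
  else 0.

Section SupportPoint.

Variables q u v : nat.
Hypothesis q_gt1 : (1 < q)%N.

Definition k_supp : nat := (q - 1 - (u + v) %% (q - 1))%N.
Definition j_supp : int := k_supp%:Z + (q * (q - 1))%:Z - (u + v * q)%:Z.
Definition s_supp : int := ((u + v) %/ (q - 1))%:Z + v%:Z - q%:Z + 1.
Definition I_value : int := binz ((u + v) %% (q - 1))%:Z j_supp.

Lemma I_value_eq0 : s_supp < 0 -> I_value = 0.
Proof.
rewrite /I_value /j_supp /s_supp /k_supp => s_lt0; apply/eqP.
apply: contraTT s_lt0 => /binz_neq0 /andP[_ j_le]; rewrite -leNgt.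
have q1_gt0 : (0 < q - 1)%N by lia.
have uv_eq := divn_eq (u + v) (q - 1); have r_lt := ltn_pmod (u + v) q1_gt0.
nia.
Qed.

Lemma dvd_twice_k_sub_j (k j : nat) : (0 < k <= q - 1)%N ->
  j%:Z = k%:Z + (q * (q - 1))%:Z - (u + v * q)%:Z ->
  ((q - 1)%:Z %| 2 * k%:Z - j%:Z)%Z = (k == k_supp).
Proof.
move=> k_range j_eq.
have -> : 2 * k%:Z - j%:Z = (k + (u + v))%:Z + (v%:Z - q%:Z) * (q - 1)%:Z.
  by rewrite j_eq; nia.
by rewrite rpredDr ?dvdz_mull // dvdzE /= dvdn_add_mod.
Qed.

Hypothesis q_odd : odd q.

Lemma I_term_eq (k j : nat) :
  I_term q (u + v * q) k j =
  if (k%:Z == k_supp%:Z) && (j%:Z == j_supp) then I_value else 0.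
Proof.
have q1_gt0 : (0 < q - 1)%N by lia.
have r_lt := ltn_pmod (u + v) q1_gt0.
rewrite /I_term /I_value /j_supp.
pose j0 := k%:Z + (q * (q - 1))%:Z - (u + v * q)%:Z.
have -> : ((q * (q - 1))%:Z + k%:Z - j%:Z == (u + v * q)%:Z) = (j%:Z == j0).
  by apply/eqP/eqP; rewrite /j0; lia.
have [j_eq|j_neq] := eqVneq (j%:Z) j0; last first.
  rewrite !andbF; case: ifP => // /andP[/eqP k_eq /eqP j_eq]; move: j_neq.
  by rewrite j_eq /j0 k_eq eqxx.
rewrite !andbT eqz_nat.
have dvd_eq := dvd_twice_k_sub_j k j ^~ j_eq.
have [k_eq|k_neq] := eqVneq k k_supp; last first.
  by case: ifP => // /and3P[k_ge1 kj_le]; rewrite dvd_eq ?(negbTE k_neq) //; lia.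
rewrite -k_eq -/j0 -j_eq eqxx /=.
have k_range : (0 < k <= q - 1)%N by rewrite k_eq /k_supp; lia.
have -> : ((u + v) %% (q - 1) = q - 1 - k)%N by rewrite k_eq /k_supp; lia.
rewrite /binz /= (andP k_range).1 dvd_eq // k_eq eqxx andbT -k_eq.
case: leqP => [kj_le|kj_gt]; last by rewrite bin_small //; lia.
have even_j : ~~ odd j.
  have two_dvd : (2 %| (q - 1)%:Z)%Z by rewrite dvdzE /=; lia.
  have dvd_kj : ((q - 1)%:Z %| 2 * k%:Z - j%:Z)%Z by rewrite dvd_eq // k_eq.
  have := dvdz_trans two_dvd dvd_kj; lia.
by rewrite -signr_odd (negbTE even_j) expr0 mulr1.
Qed.

Lemma S_term_eq (s : int) : S_term q u v s = if s == s_supp then I_value else 0.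
Proof.
have q1_gt0 : (0 < q - 1)%N by lia.
rewrite /S_term gt_max -andbA.
have -> : (v%:R - q%:R : rat) = (v%:Z - q%:Z)%:~R by rewrite intrB !pmulrn.
rewrite divn_unit_itv //.
have -> : (s == v%:Z - q%:Z + ((u + v) %/ (q - 1))%:Z + 1) = (s == s_supp).
  by apply/eqP/eqP; rewrite /s_supp; lia.
have -> : ((-1 : rat) < s%:~R) = (-1 < s) by rewrite -(ltr_int rat).
case: eqP => [->|_]; last by rewrite andbF.
have [s_gt|s_le] := ltrP (-1) s_supp; last by rewrite I_value_eq0 //; lia.
have uv_eq := divn_eq (u + v) (q - 1).
rewrite /I_value /j_supp /k_supp /s_supp; congr binz; nia.
Qed.

Lemma I_sum_eq :
  \sum_(k < q) \sum_(j < q) I_term q (u + v * q) k j = I_value.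
Proof.
have I_value_range : I_value != 0 -> 0 <= j_supp < q%:Z.
  move=> /binz_neq0 /andP[-> j_le] /=.
  have := ltn_pmod (u + v) (_ : 0 < q - 1)%N; lia.
transitivity (\sum_(k < q) (if k%:Z == k_supp%:Z then I_value else 0)).
  apply: eq_bigr => k _; under eq_bigr => j _ do rewrite I_term_eq.
  by case: eqP => _; [exact: sum_ord_pick | rewrite big1].
by apply: sum_ord_pick => _; rewrite /k_supp; lia.
Qed.

Hypotheses (u_le : (u <= q - 1)%N) (v_le : (v <= q - 1)%N).

Lemma S_sum_eq :
  \sum_(i < 4 * q) S_term q u v (i%:Z - (2 * q)%:Z) = I_value.
Proof.
under eq_bigr => i _ do rewrite S_term_eq subr_eq.
apply: sum_ord_pick => _; rewrite /s_supp.
have uv_eq := divn_eq (u + v) (q - 1); nia.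
Qed.

End SupportPoint.

Theorem lemma4p1 (q n u v : nat) :
  (exists p e : nat, [/\ prime p, (0 < e)%N & q = (p ^ e)%N]) -> odd q ->
  (1 <= n <= q ^ 2 - 2)%N -> (u <= q - 1)%N -> (v <= q - 1)%N ->
  n = (u + v * q)%N ->
  \sum_(k < q) \sum_(j < q)
     (if [&& (1 <= k)%N, (k + j <= q - 1)%N,
            ((q - 1)%:Z %| 2 * k%:Z - j%:Z)%Z
          & (q * (q - 1))%:Z + k%:Z - j%:Z == n%:Z]
      then ('C(q - 1 - k, j))%:Z * (-1) ^+ j else 0)
  =
  \sum_(i < 4 * q)
     (let s : int := i%:Z - (2 * q)%:Z in
      let t : rat := v%:R - q%:R + (u + v)%:R / (q - 1)%:R in
      if (Num.max (-1) t < s%:~R) && (s%:~R <= t + 1)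
      then binz ((u + v)%:Z - (s - v%:Z + q%:Z - 1) * (q%:Z - 1))
                ((s - 2 * v%:Z + 2 * q%:Z) * (q%:Z - 1) - 2 * (u + v)%:Z)
      else 0).
Proof.
move=> [p [e [p_prime e_gt0 q_eq]]] q_odd _ u_le v_le ->.
have q_gt1 : (1 < q)%N by rewrite q_eq -(expn0 p) ltn_exp2l // prime_gt1.
transitivity (I_value q u v); first exact: I_sum_eq.
by symmetry; exact: S_sum_eq.
Qed.
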